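(* For integers $q\ge1$, $a$, $n$ let $S(q,a,n)=\sum_{x=1}^q e\big(\frac{ax^2+nx}{q}\big)$, and for integers $n_1,n_2,n_3,m$ let $$T(q;n_1,n_2,n_3,m)=\sum_{\substack{a=1\\ (a,q)=1}}^q S(q,a,n_1)S(q,a,n_2)S(q,a,n_3)\,e\Big(\frac{\overline{a}\,m}{q}\Big),$$ where $\overline{a}$ is the inverse of $a$ modulo $q$. Then for every positive integer $r$ and all integers $n_1,n_2,n_3,m$, $$|T(2^r;n_1,n_2,n_3,m)|\le 2^{2+5r/2}.$$
   Context: $e(z)=e^{2\pi i z}$. *)

From HB Require Import structures.
From mathcomp Require Import all_boot all_order all_algebra.
From mathcomp Require Import all_classical all_reals all_analysis.
From mathcomp Require Import complex.
Set Implicit Arguments. Unset Strict Implicit. Unset Printing Implicit Defensive.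
Import Order.TTheory GRing.Theory Num.Theory.
Local Open Scope ring_scope.
Local Open Scope complex_scope.

Definition ee (R : realType) (z : R) : R[i] :=
  (cos (2 * pi * z)) +i* (sin (2 * pi * z)).

Definition Ssum (R : realType) (q : nat) (a n : int) : R[i] :=
  \sum_(1 <= x < q.+1) ee ((a * (x%:Z) ^+ 2 + n * x%:Z)%:~R / (q%:R : R)).

(* an inverse of a modulo q, taken in [0, q) (0 if none exists) *)
Definition inv_mod (q a : nat) : nat :=
  odflt 0%N (omap (@nat_of_ord q) [pick b : 'I_q | (a * b == 1 %[mod q])%N]).

Definition Tsum (R : realType) (q : nat) (n1 n2 n3 m : int) : R[i] :=
  \sum_(1 <= a < q.+1 | coprime a q)
    Ssum R q a n1 * Ssum R q a n2 * Ssum R q a n3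
    * ee (((inv_mod q a)%:Z * m)%:~R / (q%:R : R)).

From HB Require Import structures.
From mathcomp Require Import all_boot all_order all_algebra.
From mathcomp Require Import all_classical all_reals all_analysis.
From mathcomp Require Import complex.
From mathcomp Require Import ring lra.
Import Order.TTheory GRing.Theory Num.Theory.
Local Open Scope ring_scope.
Local Open Scope complex_scope.

(* For odd a, expanding |S(2^r, a, n)|^2 = S * conj S and shifting the summation
   variable turns it into sum_x e((ax^2 + nx)/2^r) * sum_y e(2axy/2^r); the inner
   geometric sum vanishes unless 2^r | 2ax, i.e. unless x = 0 or x = 2^(r-1), so
   |S|^2 <= 2^(r+1).  Bounding T term by term then gives
   |T| <= 2^r * 2^(3(r+1)/2) = 2^(3/2 + 5r/2). *)

Lemma sum_ord_periodic (V : zmodType) (q : nat) (g : nat -> V) :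
    (forall x, g (x + q)%N = g x) ->
  forall y, \sum_(x < q) g (x + y)%N = \sum_(x < q) g x.
Proof.
case: q => [|m] g_per y; first by rewrite !big_ord0.
elim: y => [|y IHy]; first by under eq_bigr do rewrite addn0.
rewrite -IHy.
have := @big_ord_recl _ 0 +%R m.+1 (fun i : 'I_m.+2 => g (i + y)%N).
rewrite big_ord_recr /= addnC g_per addrC => /addrI ->.
by apply: eq_bigr => i _; rewrite /bump /= add1n addnS.
Qed.

Lemma sum_dvd_ord q : (0 < q)%N -> (\sum_(x < q) (q %| x) = 1)%N.
Proof.
case: q => // m _; rewrite big_ord_recl dvdn0 big1 // => i _.
apply/eqP; rewrite eqb0; apply/negP => /(dvdn_leq (ltn0Sn i)).
by rewrite ltnS leqNgt ltn_ord.
Qed.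

Lemma sum_dvd_double q a : (0 < q)%N -> coprime a q ->
  (\sum_(x < 2 * q) (2 * q %| 2 * a * x) = 2)%N.
Proof.
move=> q_gt0 coprime_aq.
have dvd_x x : (2 * q %| 2 * a * x)%N = (q %| x)%N.
  by rewrite -mulnA dvdn_pmul2l // Gauss_dvdr // coprime_sym.
under eq_bigr do rewrite dvd_x.
rewrite mul2n -addnn big_split_ord /=.
under [X in (_ + X)%N]eq_bigr do rewrite dvdn_addr ?dvdnn //.
by rewrite sum_dvd_ord.
Qed.

Section ExponentialSums.
Variable R : realType.

Lemma eeD (x y : R) : ee (x + y) = ee x * ee y.
Proof.
rewrite /ee mulrDr cosD sinD.
by apply/eqP; rewrite eq_complex /= !eqxx /= addrC eqxx.
Qed.

Lemma eeN (x : R) : ee (- x) = (ee x)^*%R.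
Proof. by rewrite /ee /conjc mulrN cosN sinN. Qed.

Lemma ee_nat (n : nat) : ee (n%:R : R) = 1.
Proof.
rewrite /ee; have -> : 2 * pi * n%:R = 0 + pi *+ 2 *+ n :> R.
  by rewrite add0r -mulrnA -mulr_natr; ring.
by rewrite (periodicn (@cosD2pi R)) (periodicn (@sinD2pi R)) cos0 sin0.
Qed.

Lemma ee_int (k : int) : ee (k%:~R : R) = 1.
Proof.
case: k => n; first exact: ee_nat.
by rewrite NegzE mulrNz eeN -pmulrn ee_nat conjC1.
Qed.

Lemma norm_ee (x : R) : `|ee x| = 1.
Proof. by rewrite normc_def /= cos2Dsin2 sqrtr1. Qed.

(* ee (1 - x) is the conjugate of ee x, so it suffices to treat x <= 1/2,
   where 2 pi x lies in [0, pi] and cos is injective. *)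
Lemma ee_neq1 (x : R) : 0 < x < 1 -> ee x != 1.
Proof.
wlog x_le : x / x <= 1 / 2 => [wlog_half|].
  move=> /andP[x_gt0 x_lt1]; have [|x_gt] := lerP x (1 / 2).
    by move=> x_le; apply: wlog_half => //; rewrite x_gt0.
  have : ee (1 - x) != 1 by apply: wlog_half; lra.
  rewrite eeD -[1]/(1%:R : R) ee_nat mul1r eeN.
  by apply: contra => /eqP ->; rewrite conjC1.
move=> /andP[x_gt0 _]; rewrite /ee eq_complex /= negb_and.
apply/orP; left; apply/eqP => cos_eq1.
have pi_gt0 := @pi_gt0 R.
have : 2 * pi * x = 0.
  apply: cos_inj; rewrite ?cos0 // in_itv /= ?lexx ?(ltW pi_gt0) //.
  rewrite !mulr_ge0 ?(ltW pi_gt0) ?(ltW x_gt0) //=.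
  have half_pi : 2 * pi * (1 / 2) = pi :> R by field.
  by rewrite -[X in _ <= X]half_pi ler_pM2l ?mulr_gt0.
by apply/eqP; rewrite !mulf_neq0 ?gt_eqF.
Qed.

Definition emod (q : nat) (j : int) : R[i] := ee (j%:~R / (q%:R : R)).

Lemma emodD q j k : emod q (j + k) = emod q j * emod q k.
Proof. by rewrite /emod intrD mulrDl eeD. Qed.

Lemma conj_emod q j : (emod q j)^*%R = emod q (- j).
Proof. by rewrite /emod -eeN mulrNz mulNr. Qed.

Lemma norm_emod q j : `|emod q j| = 1.
Proof. exact: norm_ee. Qed.

Lemma emod_mull q t : (0 < q)%N -> emod q (q%:Z * t) = 1.
Proof.
move=> q_gt0; rewrite /emod intrM mulrAC pmulrn divff ?mul1r ?ee_int //.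
by rewrite pnatr_eq0 -lt0n.
Qed.

Lemma emod_neq1 q k : (0 < q)%N -> ~~ (q %| k)%N -> emod q k != 1.
Proof.
rewrite /dvdn -lt0n => q_gt0 k_mod_gt0.
rewrite (divn_eq k q) PoszD PoszM mulrC emodD emod_mull // mul1r.
apply: ee_neq1; rewrite divr_gt0 ?ltr0n //= ltr_pdivrMr ?ltr0n // mul1r.
by rewrite ltr_nat ltn_pmod.
Qed.

Lemma sum_emod_eq0 q k : ~~ (q %| k)%N -> \sum_(y < q) emod q (k * y)%N = 0.
Proof.
move=> q_ndvd_k; have [->|q_gt0] := posnP q; first by rewrite big_ord0.
(* Multiplying by emod q k != 1 only shifts the summation variable. *)
have shift : emod q k * \sum_(y < q) emod q (k * y)%N = \sum_(y < q) emod q (k * y)%N.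
  rewrite big_distrr /= -(@sum_ord_periodic _ q (fun y => emod q (k * y)%N) _ 1).
    by apply: eq_bigr => y _; rewrite -emodD -PoszD addn1 mulnS.
  by move=> y; rewrite mulnDr PoszD emodD [(k * q)%N]mulnC (PoszM q k) emod_mull // mulr1.
apply/eqP; move: shift => /eqP; rewrite -subr_eq0 -[X in _ - X]mul1r -mulrBl mulf_eq0.
by rewrite subr_eq0 (negbTE (emod_neq1 _ _ q_gt0 q_ndvd_k)).
Qed.

Lemma norm_sum_emod_le q k :
  `|\sum_(y < q) emod q (k * y)%N| <= ((q %| k) * q)%N%:R.
Proof.
have [q_dvd_k|q_ndvd_k] := boolP (q %| k)%N; last by rewrite sum_emod_eq0 ?normr0.
rewrite mul1n; apply: le_trans (ler_norm_sum _ _ _) _.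
by under eq_bigr do rewrite norm_emod; rewrite sumr_const card_ord.
Qed.

Definition quad_phase (a : nat) (n : int) (x : nat) : int := a%:Z * x%:Z ^+ 2 + n * x%:Z.

Lemma emod_quad_phase_periodic q a n x :
  emod q (quad_phase a n (x + q)) = emod q (quad_phase a n x).
Proof.
have [->|q_gt0] := posnP q; first by rewrite addn0.
have -> : quad_phase a n (x + q) =
    quad_phase a n x + q%:Z * (a%:Z * (2 * x%:Z + q%:Z) + n).
  by rewrite /quad_phase PoszD; ring.
by rewrite emodD emod_mull // mulr1.
Qed.

Lemma Ssum_ord q (a : nat) n : Ssum R q a n = \sum_(x < q) emod q (quad_phase a n x).
Proof.
rewrite /Ssum big_add1 /= big_mkord.
rewrite -(@sum_ord_periodic _ q _ (emod_quad_phase_periodic q a n) 1).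
by apply: eq_bigr => x _; rewrite addn1.
Qed.

Lemma sqr_norm_Ssum q (a : nat) n : `|Ssum R q a n| ^+ 2 =
  \sum_(x < q) emod q (quad_phase a n x) * \sum_(y < q) emod q (2 * a * x * y)%N.
Proof.
pose f x := emod q (quad_phase a n x).
(* quad_phase a n (x + y) - quad_phase a n y = quad_phase a n x + 2 a x y *)
have shift y : (\sum_(x < q) f x) * (f y)^* = \sum_(x < q) f x * emod q (2 * a * x * y)%N.
  rewrite big_distrl /= -(@sum_ord_periodic _ q (fun x => f x * (f y)^*) _ y); last first.
    by move=> x; rewrite /f emod_quad_phase_periodic.
  apply: eq_bigr => x _; rewrite /f /= conj_emod -!emodD; congr (emod q _).
  by rewrite /quad_phase !PoszM !PoszD; ring.
rewrite sqr_normc Ssum_ord rmorph_sum big_distrr /=.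
under eq_bigr do rewrite shift.
by rewrite exchange_big /=; apply: eq_bigr => x _; rewrite -big_distrr.
Qed.

Lemma sqr_norm_Ssum_le q (a : nat) n :
  `|Ssum R q a n| ^+ 2 <= (q * \sum_(x < q) (q %| 2 * a * x))%N%:R.
Proof.
rewrite -[X in X <= _]ger0_norm ?exprn_ge0 // sqr_norm_Ssum.
apply: le_trans (ler_norm_sum _ _ _) _.
rewrite big_distrr natr_sum; apply: ler_sum => x _.
rewrite normrM norm_emod mul1r.
by apply: le_trans (norm_sum_emod_le _ _) _; rewrite mulnC.
Qed.

Lemma sqr_norm_Ssum_pow2_le r (a : nat) n : (0 < r)%N -> odd a ->
  `|Ssum R (2 ^ r) a n| ^+ 2 <= (2 * 2 ^ r)%N%:R.
Proof.
case: r => // s _ odd_a.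
apply: le_trans (sqr_norm_Ssum_le _ _ _) _.
rewrite expnS sum_dvd_double ?expn_gt0 ?coprimeXr ?coprimen2 //.
by rewrite mulnC.
Qed.

Lemma norm_Tsum_le q n1 n2 n3 m (c : R) :
    (forall (a : nat) n, coprime a q -> `|Ssum R q a n| <= c%:C) ->
  `|Tsum R q n1 n2 n3 m| <= (c ^+ 3 *+ q)%:C.
Proof.
move=> Ssum_le; have [->|q_gt0] := posnP q; first by rewrite /Tsum big_geq ?normr0.
have c_ge0 : 0 <= c%:C by apply: le_trans (Ssum_le 1%N 0 (coprime1n q)).
rewrite /Tsum; apply: le_trans (ler_norm_sum _ _ _) _.
apply: (@le_trans _ _ (\sum_(1 <= a < q.+1) (c ^+ 3)%:C)); last first.
  by rewrite sumr_const_nat subn1 rmorphMn.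
rewrite big_mkcond /=; apply: ler_sum => a _.
case: ifP => [coprime_aq|_]; last by rewrite rmorphXn exprn_ge0.
rewrite !normrM norm_ee mulr1 rmorphXn !exprS expr0 mulr1 mulrA.
by rewrite !ler_pM ?mulr_ge0 ?normr_ge0 ?Ssum_le.
Qed.

Lemma norm_Ssum_pow2_le r (a : nat) n : (0 < r)%N -> odd a ->
  `|Ssum R (2 ^ r) a n| <= (2 `^ ((r%:R + 1) / 2))%:C.
Proof.
move=> r_gt0 odd_a; rewrite -(@ler_pXn2r _ 2) ?nnegrE ?normr_ge0 ?ler0c ?powR_ge0 //.
have sqr_bound : (2 `^ ((r%:R + 1) / 2)) ^+ 2 = (2 * 2 ^ r)%N%:R :> R.
  rewrite -powR_mulrn ?powR_ge0 // -powRrM divfK ?pnatr_eq0 // natr1.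
  by rewrite powR_mulrn ?ler0n // -natrX -expnS.
by rewrite -[X in _ <= X]rmorphXn sqr_bound rmorph_nat sqr_norm_Ssum_pow2_le.
Qed.
End ExponentialSums.

Theorem lemma3p6 (R : realType) (r : nat) (n1 n2 n3 m : int) :
  (0 < r)%N ->
  `|Tsum R (2 ^ r)%N n1 n2 n3 m| <=
    ((2 : R) `^ (2 + 5 * r%:R / 2))%:C.
Proof.
move=> r_gt0.
apply: le_trans (@norm_Tsum_le R _ n1 n2 n3 m (2 `^ ((r%:R + 1) / 2)) _) _.
  move=> a n coprime_a; apply: norm_Ssum_pow2_le => //.
  by rewrite -coprimen2 -(coprime_pexpr _ _ r_gt0).
rewrite lecR -powR_mulrn ?powR_ge0 // -powRrM -mulr_natr natrX.
rewrite -powR_mulrn ?ler0n // -powRD; last by apply/implyP => _; rewrite pnatr_eq0.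
by apply: ler_powR; [rewrite ler1n | lra].
Qed.
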